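(* Let $G$ be a noncyclic finite $p$-group for some prime $p$. (i) If $N$ and $M$ are normal subgroups of $G$ with $\eta(G) = \eta(G/N) = \eta(G/M)$, then $\eta(G) = \eta(G/NM)$. (ii) There exists a characteristic subgroup $X$ of $G$ such that $\eta(G) = \eta(G/X)$ and such that every normal subgroup $N$ of $G$ with $\eta(G/N) = \eta(G)$ satisfies $N \le X$.
   Context: A cyclic subgroup $C$ of a group $G$ is maximal cyclic if there is no cyclic subgroup $D$ of $G$ with $C < D$. $\eta(G)$ denotes the number of conjugacy classes of maximal cyclic subgroups of $G$. *)

From mathcomp Require Import all_boot all_fingroup all_solvable.
Set Implicit Arguments.
Unset Strict Implicit.
Unset Printing Implicit Defensive.
Local Open Scope group_scope.

Definition max_cyclic (gT : finGroupType) (G : {set gT}) : {set {set gT}} :=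
  [set C : {set gT} | [&& C \subset G, cyclic C &
     [forall D : {set gT}, ~~ [&& D \subset G, cyclic D & C \proper D]]]].

Definition eta (gT : finGroupType) (G : {set gT}) : nat :=
  #|[set C :^: G | C in max_cyclic G]|.

From mathcomp Require Import all_boot all_fingroup all_solvable.
Set Implicit Arguments.
Unset Strict Implicit.
Unset Printing Implicit Defensive.
Local Open Scope group_scope.

(* Let T(G) be the set of n in G such that <[c * n]> is G-conjugate to <[c]>
   for every maximal cyclic <[c]> of G; it is a characteristic subgroup.
   For N <| G, the classes of maximal cyclic subgroups of G / N are the images
   of the classes of those maximal cyclic C of G for which C / N is maximal
   cyclic, so eta (G / N) = eta G iff every C / N stays maximal cyclic and no
   two classes merge; both hold when N <= T(G).
   Conversely, let G be a noncyclic p-group with eta (G / N) = eta G, n in N,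
   and <[c']> maximal cyclic containing c * n.  Then <[c']> / N = <[c]> / N,
   so <[c']> is conjugate to <[c]>, and <[c']> <= (<[c']> :&: N) * <[c * n]>.
   Subgroups of a cyclic p-group form a chain, so either <[c * n]> = <[c']>,
   or <[c']> <= N, which forces G / N = 1, eta G = 1 and G cyclic.  Hence the
   normal N with eta (G / N) = eta G are exactly those below T(G), and both
   parts follow with X = T(G). *)

Section MaxCyclic.
Variable gT : finGroupType.
Implicit Types (G : {group gT}) (C : {set gT}).

Lemma conjugates_eqP G (A B : {set gT}) :
  reflect (A :^: G = B :^: G) (A \in B :^: G).
Proof. exact: (@orbit_eqP _ _ 'Js%act). Qed.

Lemma conjugates_refl G (A : {set gT}) : A \in A :^: G.
Proof. exact: (orbit_refl 'Js%act). Qed.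

Lemma max_cyclicP G C :
  reflect [/\ C \subset G, cyclic C &
           forall x, x \in G -> C \subset <[x]> -> <[x]> = C]
          (C \in max_cyclic G).
Proof.
rewrite inE; apply: (iffP and3P) => [[sCG cC /forallP maxC] | [sCG cC maxC]].
  split=> // x xG sCx; apply/eqP; rewrite eq_sym eqEsubset sCx /=.
  apply: contraR (maxC <[x]>) => sxC.
  by rewrite cycle_subG xG cycle_cyclic properE sCx.
split=> //; apply/forallP => D; apply/negP => /and3P[sDG /cyclicP[x defD] ltCD].
move: sDG ltCD; rewrite defD cycle_subG properE => xG /andP[sCx].
by rewrite maxC // subxx.
Qed.

Lemma max_cyclic_cycle G C :
  C \in max_cyclic G -> exists2 x, x \in G & C = <[x]>.
Proof.
case/max_cyclicP=> sCG /cyclicP[x defC] _.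
by exists x; rewrite // -cycle_subG -defC.
Qed.

Lemma max_cyclic_exists G x :
  x \in G -> exists2 y, <[y]> \in max_cyclic G & x \in <[y]>.
Proof.
move=> xG; pose P (H : {group gT}) := cyclic H && (H \subset G).
have [|H maxH sxH] := @maxgroup_exists _ P <[x]>%G.
  by rewrite /P cycle_cyclic cycle_subG.
have /andP[/cyclicP[y defH] sHG] := maxgroupp maxH.
exists y; last by rewrite -defH -cycle_subG.
apply/max_cyclicP; split; rewrite ?cycle_cyclic -?defH // => z zG sHz.
by apply: (maxgroupP maxH).2 sHz; rewrite /P cycle_cyclic cycle_subG.
Qed.

Lemma max_cyclicJ G C g :
  C \in max_cyclic G -> g \in G -> C :^ g \in max_cyclic G.
Proof.
case/max_cyclicP=> sCG cC maxC gG.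
apply/max_cyclicP; split; first by rewrite sub_conjg (normsP (normG G)) ?groupV.
  by case/cyclicP: cC => c ->; rewrite -cycleJ cycle_cyclic.
move=> x xG sCx; rewrite -[<[x]>](conjsgKV g) -cycleJ.
by rewrite maxC ?groupJ ?groupV // cycleJ -sub_conjg.
Qed.

Lemma max_cyclic1 : max_cyclic [1 gT] = [set 1].
Proof.
apply/setP => C; apply/(max_cyclicP 1%G)/set1P.
  by case=> sC1 /cyclicP[x defC] _; apply/eqP; rewrite eqEsubset sC1 defC sub1G.
move->; split=> [||x]; [exact: subxx | exact: cyclic1 |].
by move=> /set1P-> _; apply: cycle1.
Qed.

Lemma eta1 : eta [1 gT] = 1%N.
Proof. by rewrite /eta max_cyclic1 imset_set1 cards1. Qed.

Lemma trivg_max_cyclic G : 1 \in max_cyclic G -> G :=: 1.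
Proof.
case/max_cyclicP=> _ _ max1; apply/trivgP/subsetP => x xG.
by rewrite -(max1 x xG (sub1G _)) cycle_id.
Qed.

End MaxCyclic.

Section InjmMaxCyclic.
Variables (aT rT : finGroupType) (D : {group aT}) (f : {morphism D >-> rT}).
Hypothesis injf : 'injm f.

Lemma injm_max_cyclicW (G : {group aT}) C :
  G \subset D -> C \in max_cyclic G -> f @* C \in max_cyclic (f @* G).
Proof.
move=> sGD mC; have [_ _ maxC] := max_cyclicP _ _ mC.
have [c cG defC] := max_cyclic_cycle mC.
have sCD : C \subset D by rewrite defC cycle_subG (subsetP sGD).
apply/max_cyclicP; split.
- by rewrite morphimS // defC cycle_subG.
- by rewrite defC morphim_cycle ?(subsetP sGD) ?cycle_cyclic.
move=> _ /morphimP[x xD xG ->]; rewrite -morphim_cycle //.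
by rewrite injmSK // => /(maxC x xG) ->.
Qed.

End InjmMaxCyclic.

Lemma injm_max_cyclic (aT rT : finGroupType) (D G : {group aT})
    (f : {morphism D >-> rT}) (C : {set aT}) :
  'injm f -> G \subset D -> C \subset G ->
  (f @* C \in max_cyclic (f @* G)) = (C \in max_cyclic G).
Proof.
move=> injf sGD sCG; apply/idP/idP; last exact: injm_max_cyclicW.
move/(injm_max_cyclicW (injm_invm injf)).
by rewrite !morphim_invm ?(subset_trans sCG) //; apply; rewrite morphimS.
Qed.

Section QuotientMaxCyclic.
Variables (gT : finGroupType) (G N : {group gT}).
Hypothesis nsNG : N <| G.
Let nNG := normal_norm nsNG.

Lemma quotient_conjugates (C : {set gT}) :
  [set D / N | D in C :^: G] = (C / N) :^: (G / N).
Proof.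
rewrite /conjugates -imset_comp [G / N]morphimEsub // -imset_comp.
by apply: eq_in_imset => x xG /=; rewrite quotientJ ?(subsetP nNG).
Qed.

Lemma max_cyclic_quotient_lift (D : {set coset_of N}) :
  D \in max_cyclic (G / N) -> exists2 C, C \in max_cyclic G & C / N = D.
Proof.
move=> mD; have [_ /morphimP[x nNx xG ->] defD] := max_cyclic_cycle mD.
have [y my xy] := max_cyclic_exists xG; exists <[y]> => //.
have yG : y \in G by rewrite -cycle_subG; case/max_cyclicP: my.
have [_ _ maxD] := max_cyclicP _ _ mD.
have sDy : D \subset <[y]> / N.
  by rewrite defD -quotient_cycle // quotientS ?cycle_subG.
rewrite quotient_cycle ?(subsetP nNG) // maxD ?mem_quotient //.
by rewrite -quotient_cycle ?(subsetP nNG).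
Qed.

Lemma quotient_max_cyclic_classes :
  [set D :^: (G / N) | D in max_cyclic (G / N)] =
  [set [set D / N | D in K] | K : {set {set gT}} in
     [set C :^: G | C in max_cyclic G & C / N \in max_cyclic (G / N)]].
Proof.
apply/eqP; rewrite eqEsubset; apply/andP; split; apply/subsetP.
  move=> _ /imsetP[D mD ->]; have [C mC defD] := max_cyclic_quotient_lift mD.
  apply/imsetP; exists (C :^: G); first by apply: imset_f; rewrite inE mC defD.
  by rewrite quotient_conjugates defD.
move=> _ /imsetP[_ /imsetP[C /setIdP[_ mCN] ->] ->].
by rewrite quotient_conjugates; apply: imset_f.
Qed.

Lemma eta_quotientP :
  eta (G / N) = eta G <->
  (forall C, C \in max_cyclic G -> C / N \in max_cyclic (G / N)) /\
  (forall C1 C2, C1 \in max_cyclic G -> C2 \in max_cyclic G ->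
     C1 / N \in (C2 / N) :^: (G / N) -> C1 \in C2 :^: G).
Proof.
pose q (K : {set {set gT}}) := [set D / N | D in K].
pose S := [set C in max_cyclic G | C / N \in max_cyclic (G / N)].
have etaGN : eta (G / N) = #|q @: [set C :^: G | C in S]|.
  by rewrite /eta quotient_max_cyclic_classes.
split=> [eq_eta | [mcq injq]]; last first.
  rewrite etaGN; have -> : S = max_cyclic G.
    by apply/setP => C; rewrite inE andb_idr //; apply: mcq.
  rewrite card_in_imset // => _ _ /imsetP[C1 mC1 ->] /imsetP[C2 mC2 ->].
  rewrite /q !quotient_conjugates => /conjugates_eqP.
  by move/(injq _ _ mC1 mC2)/conjugates_eqP.
have clsS : [set C :^: G | C in S] = [set C :^: G | C in max_cyclic G].
  apply/eqP; rewrite eqEcard imsetS /=; last first.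
    by apply/subsetP => C; rewrite inE => /andP[].
  by rewrite -[X in X <= _]eq_eta etaGN leq_imset_card.
have /imset_injP inj_q :
    #|q @: [set C :^: G | C in S]| == #|[set C :^: G | C in S]|.
  by rewrite eqn_leq leq_imset_card -etaGN eq_eta clsS /=.
split=> [C mC | C1 C2 mC1 mC2 C1C2].
  have /imsetP[C' SC' eqCC'] : C :^: G \in [set C :^: G | C in S].
    by rewrite clsS; apply: imset_f.
  have /imsetP[g gG ->] : C \in C' :^: G by rewrite -eqCC' conjugates_refl.
  case/setIdP: SC' => _ mC'N.
  by rewrite quotientJ ?(subsetP nNG) // max_cyclicJ ?mem_quotient.
have eqC12 : C1 :^: G = C2 :^: G.
  apply: inj_q; rewrite ?clsS; [exact: imset_f | exact: imset_f |].
  by rewrite /q !quotient_conjugates; exact/conjugates_eqP.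
by rewrite -eqC12 conjugates_refl.
Qed.

End QuotientMaxCyclic.

Section EtaKernel.
Variable gT : finGroupType.
Implicit Types (G : {group gT}) (c n x : gT).

Definition eta_kernel (G : {set gT}) :=
  [set n in G | [forall c,
     (<[c]> \in max_cyclic G) ==> (<[c * n]> \in <[c]> :^: G)]].

Lemma eta_kernelP G n :
  reflect (n \in G /\
           forall c, <[c]> \in max_cyclic G -> <[c * n]> \in <[c]> :^: G)
          (n \in eta_kernel G).
Proof.
rewrite inE; apply: (iffP andP) => [] [nG kerN]; split=> //.
  by move=> c mc; apply: (implyP (forallP kerN c)).
by apply/forallP => c; apply/implyP; apply: kerN.
Qed.

Lemma eta_kernel_sub G : eta_kernel G \subset G.
Proof. by apply/subsetP => n /eta_kernelP[]. Qed.

Lemma group_set_eta_kernel G : group_set (eta_kernel G).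
Proof.
apply/group_setP; split.
  by apply/eta_kernelP; split=> // c _; rewrite mulg1 conjugates_refl.
move=> m n /eta_kernelP[mG kerm] /eta_kernelP[nG kern].
apply/eta_kernelP; split=> [|c mc]; first exact: groupM.
have /imsetP[g gG defcm] := kerm c mc.
have mcm : <[c * m]> \in max_cyclic G by rewrite defcm max_cyclicJ.
apply/conjugates_eqP; rewrite mulgA (conjugates_eqP _ _ _ (kern _ mcm)).
by rewrite defcm conjugates_conj lcoset_id.
Qed.

Canonical eta_kernel_group G := Group (group_set_eta_kernel G).

Lemma eta_kernel_char G : eta_kernel G \char G.
Proof.
apply/charP; split=> [|f injf fG]; first exact: eta_kernel_sub.
apply/eqP; rewrite eqEcard card_injm ?eta_kernel_sub // leqnn andbT.
apply/subsetP => _ /morphimP[n _ /eta_kernelP[nG kern] ->].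
have fGG x : x \in G -> f x \in G.
  by move=> xG; rewrite -[in X in _ \in X]fG mem_morphim.
apply/eta_kernelP; split=> [|c mc]; first exact: fGG.
have cG : c \in G by rewrite -cycle_subG; case/max_cyclicP: mc.
have /morphimP[c0 _ c0G defc] : c \in f @* G by rewrite fG.
have mc0 : <[c0]> \in max_cyclic G.
  by rewrite -(injm_max_cyclic injf) ?cycle_subG // fG morphim_cycle // -defc.
have /imsetP[g gG defc0n] := kern c0 mc0.
apply/imsetP; exists (f g); first exact: fGG.
by rewrite defc -morphM // -!morphim_cycle ?groupM // defc0n morphimJ.
Qed.

End EtaKernel.

Section EtaKernelQuotient.
Variables (gT : finGroupType) (G N : {group gT}).
Hypotheses (nsNG : N <| G) (sNK : N \subset eta_kernel G).
Let nNG := normal_norm nsNG.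

Lemma eta_kernel_lift_cycle c x :
  <[c]> \in max_cyclic G -> x \in G -> coset N c \in <[coset N x]> ->
  <[x]> \in <[c]> :^: G.
Proof.
move=> mc xG /cycleP[k ck].
have cG : c \in G by rewrite -cycle_subG; case/max_cyclicP: mc.
have /eta_kernelP[_ kerN] : c^-1 * x ^+ k \in eta_kernel G.
  apply: (subsetP sNK); apply: coset_idr.
    by rewrite groupM ?groupV ?groupX ?(subsetP nNG).
  by rewrite morphM ?morphV ?morphX ?groupV ?groupX ?(subsetP nNG) // -ck mulVg.
have := kerN c mc; rewrite mulKVg => xkc.
have mxk : <[x ^+ k]> \in max_cyclic G.
  by case/imsetP: xkc => g gG ->; apply: max_cyclicJ.
have [_ _ maxxk] := max_cyclicP _ _ mxk.
by rewrite (maxxk x xG (cycleX x k)).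
Qed.

Lemma eta_quotient_kernel : eta (G / N) = eta G.
Proof.
apply/(eta_quotientP nsNG); split=> [C mC | C1 C2 mC1 mC2].
  have [c cG defC] := max_cyclic_cycle mC; rewrite defC in mC *.
  rewrite quotient_cycle ?(subsetP nNG) //.
  apply/max_cyclicP; split; rewrite ?cycle_cyclic ?cycle_subG ?mem_quotient //.
  move=> _ /morphimP[x _ xG ->] scx.
  have /imsetP[g gG defx] : <[x]> \in <[c]> :^: G.
    by apply: eta_kernel_lift_cycle; rewrite // -cycle_subG.
  apply/eqP; rewrite eq_sym eqEcard scx /= -!quotient_cycle ?(subsetP nNG) //.
  by rewrite defx quotientJ ?(subsetP nNG) // cardJg.
have [c1 c1G defC1] := max_cyclic_cycle mC1; rewrite defC1 in mC1 *.
case/imsetP=> _ /morphimP[g _ gG ->]; rewrite -quotientJ ?(subsetP nNG) //.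
have [c2 c2G defC2] := max_cyclic_cycle (max_cyclicJ mC2 gG).
rewrite defC2 !quotient_cycle ?(subsetP nNG) // => eqc12.
have /conjugates_eqP : C2 :^ g \in <[c1]> :^: G.
  by rewrite defC2 (eta_kernel_lift_cycle mC1 c2G) // -eqc12 cycle_id.
rewrite conjugates_conj lcoset_id // => ->.
exact: conjugates_refl.
Qed.

End EtaKernelQuotient.

Section PGroup.
Variable gT : finGroupType.
Implicit Types (G : {group gT}).

Lemma cyclic_pgroup_sub_mulg (p : nat) (C H K : {group gT}) :
  p.-group C -> cyclic C -> H \subset C -> K \subset C -> C \subset H * K ->
  (C \subset H) || (C \subset K).
Proof.
move=> pC cC sHC sKC sC_HK.
have cardH := card_pgroup (pgroupS sHC pC).
have cardK := card_pgroup (pgroupS sKC pC).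
have [le_HK | /ltnW le_KH] := leqP (logn p #|H|) (logn p #|K|).
  apply/orP; right; apply: subset_trans sC_HK (mul_subG _ (subxx _)).
  by rewrite -(cardSg_cyclic cC) // cardH cardK dvdn_exp2l.
apply/orP; left; apply: subset_trans sC_HK (mul_subG (subxx _) _).
by rewrite -(cardSg_cyclic cC) // cardH cardK dvdn_exp2l.
Qed.

Lemma eta_le1_cyclic (p : nat) G : p.-group G -> eta G <= 1 -> cyclic G.
Proof.
move=> pG /card_le1_eqP eta_le1.
have [c mc _] := max_cyclic_exists (group1 G).
have scG : <[c]> \subset G by case/max_cyclicP: mc.
have [<- | [M maxM scM]] := maximal_exists scG; first exact: cycle_cyclic.
have /andP[_ /negP[]] := maxgroupp maxM.
apply/subsetP => x xG; have [y my xy] := max_cyclic_exists xG.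
have /imsetP[g gG defy] : <[y]> \in <[c]> :^: G.
  by rewrite (eta_le1 (<[y]> :^: G) (<[c]> :^: G)) ?conjugates_refl //;
    apply: imset_f.
have nMG := normal_norm (p_maximal_normal pG maxM).
by apply: subsetP xy; rewrite defy -(normsP nMG g gG) conjSg.
Qed.

Lemma sub_eta_kernel (p : nat) G (N : {group gT}) :
  p.-group G -> ~~ cyclic G -> N <| G -> eta (G / N) = eta G ->
  N \subset eta_kernel G.
Proof.
move=> pG ncG nsNG eq_eta; have nNG := normal_norm nsNG.
have [mcq injq] := (eta_quotientP nsNG).1 eq_eta.
apply/subsetP => n Nn; have nG := subsetP (normal_sub nsNG) n Nn.
apply/eta_kernelP; split=> // c mc.
have cG : c \in G by rewrite -cycle_subG; case/max_cyclicP: mc.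
have [c' mc' cn_c'] := max_cyclic_exists (groupM cG nG).
have c'G : c' \in G by rewrite -cycle_subG; case/max_cyclicP: mc'.
have cnN : coset N (c * n) = coset N c.
  by rewrite morphM ?(subsetP nNG) //= (coset_id Nn) mulg1.
have eqcN : <[c']> / N = <[c]> / N.
  have [_ _ maxcN] := max_cyclicP _ _ (mcq _ mc).
  have scc' : <[c]> / N \subset <[c']> / N.
    by rewrite quotient_cycle ?(subsetP nNG) // cycle_subG -cnN mem_quotient.
  rewrite quotient_cycle ?(subsetP nNG) // maxcN ?mem_quotient //.
  by rewrite -quotient_cycle ?(subsetP nNG).
have c'c : <[c']> \in <[c]> :^: G.
  by apply: injq mc' mc _; rewrite eqcN conjugates_refl.
have sc'_N_cn : <[c']> \subset (<[c']> :&: N) * <[c * n]>.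
  rewrite group_modr ?cycle_subG // subsetI subxx.
  rewrite -quotientSK ?cycle_subG ?(subsetP nNG) //.
  by rewrite eqcN !quotient_cycle ?(subsetP nNG) ?groupM //= cnN.
have pc' : p.-group <[c']> by apply: pgroupS pG; rewrite cycle_subG.
have scn_c' : <[c * n]> \subset <[c']> by rewrite cycle_subG.
have [/subset_trans/(_ (subsetIr _ _)) sc'N | sc'_cn] := orP
  (cyclic_pgroup_sub_mulg pc' (cycle_cyclic c') (subsetIl _ _) scn_c' sc'_N_cn).
  have GN1 : G / N = 1.
    by apply: trivg_max_cyclic; rewrite -(quotientS1 sc'N) eqcN mcq.
  by case/negP: ncG; apply: (eta_le1_cyclic pG); rewrite -eq_eta GN1 eta1.
suff -> : <[c * n]> = <[c']> by [].
by apply/eqP; rewrite eqEsubset scn_c'.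
Qed.

End PGroup.

Theorem corollary4p2 (gT : finGroupType) (p : nat) (G : {group gT}) :
  prime p -> p.-group G -> ~~ cyclic G ->
  (forall N M : {group gT}, N <| G -> M <| G ->
     eta G = eta (G / N) -> eta G = eta (G / M) ->
     eta G = eta (G / (N * M)))
  /\
  (exists X : {group gT},
     [/\ X \char G, eta G = eta (G / X) &
       forall N : {group gT}, N <| G -> eta (G / N) = eta G -> N \subset X]).
Proof.
move=> _ pG ncG; split=> [N M nsNG nsMG etaN etaM | ].
  have nNM := subset_trans (normal_sub nsMG) (normal_norm nsNG).
  rewrite -(norm_joinEr nNM) eta_quotient_kernel ?normalY // join_subG.
  rewrite (sub_eta_kernel pG ncG nsNG (esym etaN)).
  by rewrite (sub_eta_kernel pG ncG nsMG (esym etaM)).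
exists (eta_kernel_group G); split; first exact: eta_kernel_char.
  by rewrite eta_quotient_kernel ?char_normal ?eta_kernel_char.
by move=> N nsNG; apply: sub_eta_kernel pG ncG nsNG.
Qed.
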